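(* Let $F$ be a non-archimedean local field. For every $b\in B(\Gamma)^{\flat}$ there is a tropical curve $(\Gamma_b,w_b)$ such that there is a measure-preserving isomorphism $\mathsf{trop}(\pi^{-1}(b))\simeq J(\Gamma_b,w_b)$.
   Context: $\Gamma$ is a finite graph with edge set $E(\Gamma)$; $B(\Gamma)=\mathsf{Spec}\,\mathcal{O}_F[[T_e : e\in E(\Gamma)]]$, $\Delta\subset B(\Gamma)$ is the union of the divisors $(T_e)$, and $B(\Gamma)^{\flat}=B(\Gamma)(\mathcal{O}_F)\cap(B(\Gamma)\setminus\Delta)(F)$. $\pi\colon\mathfrak{V}(\Gamma,\eta)\to B(\Gamma)$ is the hypertoric Hitchin family (Mumford-type quotient of a GIT quotient of $\mathbb{W}^{E(\Gamma)}$ by the lattice $H_1(\Gamma,\mathbb{Z})$); for $b\in B(\Gamma)^{\flat}$ the fibre is the abelian $F$-variety $\pi^{-1}(b)=H^1(\Gamma,\mathbb{G}_{m})/\sigma_b(H_1(\Gamma,\mathbb{Z}))$, where $\sigma_b(\gamma)$ is the class of $(b_e^{\langle\gamma,e\rangle})_{e\in E(\Gamma)}$. For an abelian variety $A=\mathbb{G}_{m}^r/Y$ with $Y$ a discrete group, $\mathsf{trop}(A)=\mathbb{R}^r/\log|Y|$, with the measure induced by Lebesgue measure on $\mathbb{R}^r$. A tropical curve is a pair $(\Gamma,w)$ with $w\colon E(\Gamma)\to\mathbb{Q}_{>0}$; its Jacobian $J(\Gamma,w)$ is the cokernel of $\tau_w\colon H_1(\Gamma,\mathbb{Z})\to H^1(\Gamma,\mathbb{Z})$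 (taken as the torus $H^1(\Gamma,\mathbb{R})/\tau_w(H_1(\Gamma,\mathbb{Z}))$), where $\tau_w(\gamma)=\sum_{e}w(e)\langle\gamma,[e]\rangle[e]$. *)

From HB Require Import structures.
From mathcomp Require Import all_boot all_order all_algebra.
From mathcomp Require Import reals.
Set Implicit Arguments. Unset Strict Implicit. Unset Printing Implicit Defensive.
Import Order.TTheory GRing.Theory Num.Theory.
Local Open Scope ring_scope.

(* A non-archimedean local field: a field F with a normalized discrete
   valuation [val] (values on nonzero elements; val 0 is irrelevant),
   complete, with finite residue field. *)
Record nonarch_local_field (F : fieldType) := NALF {
  val : F -> int;
  val_mul : forall x y : F, x != 0 -> y != 0 -> val (x * y) = val x + val y;
  val_ultra : forall x y : F, x != 0 -> y != 0 -> x + y != 0 ->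
    Num.min (val x) (val y) <= val (x + y);
  val_uniformizer : exists pi : F, pi != 0 /\ val pi = 1;
  (* residue field O_F / m_F is finite *)
  residue_finite : exists s : seq F, forall x : F, x != 0 -> 0 <= val x ->
    exists2 a, a \in s & (a = 0 \/ 0 <= val a) /\ (x = a \/ 1 <= val (x - a));
  val_complete : forall u : nat -> F,
    (forall k : int, exists N : nat, forall m n : nat, (N <= m)%N -> (N <= n)%N ->
        u m = u n \/ k <= val (u m - u n)) ->
    exists l : F, forall k : int, exists N : nat, forall n : nat, (N <= n)%N ->
        u n = l \/ k <= val (u n - l)
}.

(* log|x| for the normalized absolute value |x| = q^{-v(x)}, log taken to base q. *)
Definition logabs (R : realType) (F : fieldType) (LF : nonarch_local_field F)
  (x : F) : R := - ((val LF x)%:~R).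

(* B(Gamma)^flat: O_F-points of Spec O_F[[T_e]] (T_e |-> b_e in m_F) avoiding Delta. *)
Definition in_B_flat (F : fieldType) (LF : nonarch_local_field F) (E : finType)
  (b : E -> F) : Prop := forall e, b e != 0 /\ 1 <= val LF (b e).

(* Integral 1-cycles: elements of H_1(Gamma, Z) inside Z^E. *)
Definition is_cycle (V E : finType) (src tgt : E -> V) (c : E -> int) : Prop :=
  forall v : V, \sum_(e | tgt e == v) c e - \sum_(e | src e == v) c e = 0.

Definition is_H1_basis (V E : finType) (src tgt : E -> V) (g : nat)
  (gam : 'I_g -> E -> int) : Prop :=
  [/\ forall i, is_cycle src tgt (gam i),
      forall n : 'I_g -> int, (forall e, \sum_i n i * gam i e = 0) -> forall i, n i = 0
    & forall c, is_cycle src tgt c -> exists n : 'I_g -> int,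
        forall e, c e = \sum_i n i * gam i e].

Definition lattice (R : realType) (g : nat) (M : 'M[R]_g) (x : 'rV[R]_g) : Prop :=
  exists n : 'rV[int]_g, x = map_mx (fun z : int => z%:~R) n *m M.

(* Measure-preserving isomorphism of real tori R^g / lattice M ~ R^g' / lattice M':
   a linear isomorphism with |det| = 1 carrying one lattice onto the other. *)
Definition mp_iso (R : realType) (g g' : nat) (M : 'M[R]_g) (M' : 'M[R]_g') : Prop :=
  exists h : g = g', exists A : 'M[R]_g',
    `|\det A| = 1 /\
    forall x : 'rV[R]_g, lattice M x <-> lattice M' (castmx (erefl 1%N, h) x *m A).

(* trop(pi^{-1}(b)): with H^1(Gamma,G_m) = Hom(H_1,G_m) identified with G_m^g by
   evaluation on the basis gam, sigma_b(gam_i) has coordinates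
   y_ij = prod_e b_e^(<gam_i,e><gam_j,e>); the lattice is log|Y|. *)
Definition trop_fibre_mx (R : realType) (F : fieldType) (LF : nonarch_local_field F)
  (E : finType) (b : E -> F) (g : nat) (gam : 'I_g -> E -> int) : 'M[R]_g :=
  \matrix_(i, j) logabs R LF (\prod_e b e ^ (gam i e * gam j e)).

(* Jacobian J(Gamma,w) = H^1(Gamma,R)/tau_w(H_1(Gamma,Z)), with H^1(Gamma,R) =
   Hom(H_1,R) identified with R^g via the basis gam. *)
Definition jac_mx (R : realType) (E : finType) (w : E -> rat) (g : nat)
  (gam : 'I_g -> E -> int) : 'M[R]_g :=
  \matrix_(i, j) \sum_e ratr (w e) * ((gam i e * gam j e)%:~R).

(* With the basis [gam] of H_1 identified with the coordinates of H^1, the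
   lattice log|Y| of the tropicalized fibre has Gram matrix
   -(sum_e v(b_e) <gam_i,e><gam_j,e>), i.e. it is (up to sign) the period
   matrix of the tropical Jacobian of Gamma itself with edge lengths
   w_e = v(b_e) > 0.  Another basis of H_1 changes this matrix by a
   congruence P J P^T with P unimodular, and x |-> -x P^T is then a
   determinant-one linear map carrying one lattice onto the other. *)

From Pilot Require Import Defs.
From HB Require Import structures.
From mathcomp Require Import all_boot all_order all_algebra.
From mathcomp Require Import reals.
Import Order.TTheory GRing.Theory Num.Theory.
Local Open Scope ring_scope.

Section Valuation.
Variables (F : fieldType) (LF : nonarch_local_field F).

Lemma val1 : Defs.val LF 1 = 0.
Proof.
have := val_mul LF (oner_neq0 F) (oner_neq0 F).
by rewrite mulr1 => /(congr1 (fun z => z - Defs.val LF 1)); rewrite subrr addrK.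
Qed.

Lemma valV (x : F) : x != 0 -> Defs.val LF x^-1 = - Defs.val LF x.
Proof.
move=> x0; have := val_mul LF x0 (invr_neq0 x0).
by rewrite mulfV // val1 => /eqP; rewrite eq_sym addrC addr_eq0 => /eqP.
Qed.

Lemma val_exprn (x : F) (n : nat) : x != 0 -> Defs.val LF (x ^+ n) = Defs.val LF x *+ n.
Proof.
move=> x0; elim: n => [|n IH]; first by rewrite expr0 val1.
by rewrite exprS val_mul ?expf_neq0 // IH mulrS.
Qed.

Lemma val_exprz (x : F) (z : int) : x != 0 -> Defs.val LF (x ^ z) = Defs.val LF x * z.
Proof.
move=> x0; case: z => n; first by rewrite val_exprn // -mulr_natr natz.
by rewrite valV ?expf_neq0 // val_exprn // NegzE mulrN -mulr_natr natz.
Qed.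

Lemma val_prod (I : finType) (f : I -> F) : (forall i, f i != 0) ->
  Defs.val LF (\prod_i f i) = \sum_i Defs.val LF (f i).
Proof.
move=> f0; apply: (big_ind2 (fun x v => x != 0 -> Defs.val LF x = v)) => //.
- by rewrite val1.
- move=> x1 v1 x2 v2 IH1 IH2; rewrite mulf_eq0 negb_or => /andP [x10 x20].
  by rewrite val_mul // IH1 // IH2.
- by rewrite prodf_seq_neq0; apply/allP => i _; apply: f0.
Qed.

End Valuation.

Section H1Basis.
Context {V E : finType} {src tgt : E -> V}.

Lemma H1_basis_coords {g g' : nat} {gam : 'I_g -> E -> int} {gam' : 'I_g' -> E -> int} :
  is_H1_basis src tgt gam -> (forall i, is_cycle src tgt (gam' i)) ->
  exists P : 'M[int]_(g', g), forall e, \col_i gam' i e = P *m \col_k gam k e.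
Proof.
case=> _ _ span cyc'.
have /fin_all_exists [n Hn] := fun i => span _ (cyc' i).
exists (\matrix_(i, k) n i k) => e; apply/matrixP => i j.
by rewrite !mxE Hn; apply: eq_bigr => k _; rewrite !mxE.
Qed.

Lemma H1_basis_coords_inv {g g' : nat} {gam : 'I_g -> E -> int} {gam' : 'I_g' -> E -> int}
    {P : 'M[int]_(g', g)} {Q : 'M[int]_(g, g')} :
  is_H1_basis src tgt gam' ->
  (forall e, \col_i gam' i e = P *m \col_k gam k e) ->
  (forall e, \col_k gam k e = Q *m \col_i gam' i e) ->
  P *m Q = 1%:M.
Proof.
case=> _ indep _ HP HQ; apply/eqP; rewrite -subr_eq0; apply/eqP/matrixP => i l.
set D := P *m Q - 1%:M.
have D_gam' e : D *m \col_i gam' i e = 0.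
  by rewrite mulmxBl mul1mx -mulmxA -HQ -HP subrr.
clearbody D; rewrite mxE; apply: (indep (fun l => D i l)) => e.
have := congr1 (fun M : 'M[int]_(g', 1) => M i 0) (D_gam' e).
by rewrite !mxE => sum0; rewrite -[RHS]sum0; apply: eq_bigr => k _; rewrite mxE.
Qed.

Lemma H1_basis_change {g g' : nat} {gam : 'I_g -> E -> int} {gam' : 'I_g' -> E -> int} :
  is_H1_basis src tgt gam -> is_H1_basis src tgt gam' ->
  exists (P : 'M[int]_(g', g)) (Q : 'M[int]_(g, g')),
    [/\ P *m Q = 1%:M, Q *m P = 1%:M
      & forall e, \col_i gam' i e = P *m \col_k gam k e].
Proof.
move=> B B'; case: (B) (B') => [cyc _ _] [cyc' _ _].
have [P HP] := H1_basis_coords B cyc'; have [Q HQ] := H1_basis_coords B' cyc.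
by exists P, Q; split=> //; apply: H1_basis_coords_inv; eassumption.
Qed.

End H1Basis.

Lemma unimodular_leq_dim {g g' : nat} {P : 'M[int]_(g', g)} {Q : 'M[int]_(g, g')} :
  P *m Q = 1%:M -> (g' <= g)%N.
Proof.
move=> /(congr1 (map_mx (intr : int -> rat))); rewrite map_mxM map_mx1 => PQ.
have := mxrankM_maxl (map_mx (intr : int -> rat) P) (map_mx intr Q).
by rewrite PQ mxrank1 => /leq_trans; apply; apply: rank_leq_col.
Qed.

Lemma unimodular_normr_det {g : nat} {P Q : 'M[int]_g} :
  P *m Q = 1%:M -> `|\det P| = 1.
Proof.
move=> /(congr1 determinant); rewrite det_mulmx det1.
move=> /(congr1 absz); rewrite abszM => /eqP; rewrite muln_eq1 => /andP [/eqP dP _].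
by rewrite -abszE dP.
Qed.

Section Lattice.
Context {R : realType} {g : nat}.

Lemma lattice_mulmxl (M : 'M[R]_g) (U : 'M[int]_g) (x : 'rV[R]_g) :
  lattice (map_mx intr U *m M) x -> lattice M x.
Proof. by case=> n ->; exists (n *m U); rewrite map_mxM mulmxA. Qed.

Lemma lattice_mulmxr (M A : 'M[R]_g) (x : 'rV[R]_g) :
  lattice M x -> lattice (M *m A) (x *m A).
Proof. by case=> n ->; exists n; rewrite mulmxA. Qed.

Lemma lattice_unimodular {M : 'M[R]_g} {U U' : 'M[int]_g} {x : 'rV[R]_g} :
  U' *m U = 1%:M -> lattice (map_mx intr U *m M) x <-> lattice M x.
Proof.
move=> U'U; split=> [|Mx]; first exact: lattice_mulmxl.
by apply: (lattice_mulmxl _ U'); rewrite mulmxA -map_mxM U'U map_mx1 mul1mx.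
Qed.

Lemma mp_iso_unimodular_mulmx {M A : 'M[R]_g} {U U' : 'M[int]_g} :
  U' *m U = 1%:M -> `|\det A| = 1 -> mp_iso M (map_mx intr U *m M *m A).
Proof.
move=> U'U detA; exists erefl, A; split=> // x; rewrite castmx_id -mulmxA.
rewrite (lattice_unimodular U'U); split; first exact: lattice_mulmxr.
have A_unit : A \in unitmx by rewrite unitmxE unitfE -normr_eq0 detA oner_eq0.
by move=> /(lattice_mulmxr _ (invmx A)); rewrite !mulmxK.
Qed.

End Lattice.

Section PeriodMatrices.
Variable R : realType.
Context {E : finType}.

Lemma jac_mxE (w : E -> rat) {g : nat} (gam : 'I_g -> E -> int) :
  jac_mx R w gam = \sum_e ratr (w e) *:
    (map_mx intr (\col_i gam i e) *m (map_mx intr (\col_i gam i e))^T).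
Proof.
apply/matrixP => i j; rewrite !mxE summxE; apply: eq_bigr => e _.
by rewrite !mxE big_ord1 !mxE intrM.
Qed.

Lemma jac_mx_basis_change (w : E -> rat) {g g' : nat} {gam : 'I_g -> E -> int}
    {gam' : 'I_g' -> E -> int} {P : 'M[int]_(g', g)} :
  (forall e, \col_i gam' i e = P *m \col_k gam k e) ->
  jac_mx R w gam' = map_mx intr P *m jac_mx R w gam *m (map_mx intr P)^T.
Proof.
move=> HP; rewrite !jac_mxE mulmx_sumr mulmx_suml; apply: eq_bigr => e _.
by rewrite HP map_mxM trmx_mul -scalemxAr -scalemxAl !mulmxA.
Qed.

Lemma trop_fibre_mx_jac (F : fieldType) (LF : nonarch_local_field F) (b : E -> F)
    {g : nat} (gam : 'I_g -> E -> int) :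
  (forall e, b e != 0) ->
  trop_fibre_mx R LF b gam = - jac_mx R (fun e => (Defs.val LF (b e))%:~R) gam.
Proof.
move=> b0; apply/matrixP => i j.
rewrite !mxE /logabs val_prod => [|e]; last exact: expfz_neq0.
rewrite rmorph_sum; congr (- _); apply: eq_bigr => e _.
by rewrite val_exprz // ratr_int /= intrM.
Qed.

End PeriodMatrices.

Theorem proposition4p2 (R : realType) (F : fieldType) (LF : nonarch_local_field F)
  (V E : finType) (src tgt : E -> V) (b : E -> F) (hb : in_B_flat LF b) :
  exists (V' E' : finType) (src' tgt' : E' -> V') (w : E' -> rat),
    (forall e, 0 < w e) /\
    forall (g : nat) (gam : 'I_g -> E -> int) (g' : nat) (gam' : 'I_g' -> E' -> int),
      is_H1_basis src tgt gam -> is_H1_basis src' tgt' gam' ->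
      mp_iso (trop_fibre_mx R LF b gam) (jac_mx R w gam').
Proof.
pose w e : rat := (Defs.val LF (b e))%:~R.
exists V, E, src, tgt, w; split=> [e|g gam g' gam' B B'].
  by rewrite ltr0z; apply: lt_le_trans (hb e).2.
have [P [Q [PQ QP HP]]] := H1_basis_change B B'.
have eq_g : g = g'.
  by apply/eqP; rewrite eqn_leq (unimodular_leq_dim PQ) (unimodular_leq_dim QP).
subst g'.
rewrite trop_fibre_mx_jac => [|e]; last exact: (hb e).1.
set J := jac_mx R w gam.
have -> : jac_mx R w gam' = map_mx intr P *m - J *m - (map_mx intr P)^T.
  by rewrite (jac_mx_basis_change R w HP) !mulmxN mulNmx opprK.
apply: (mp_iso_unimodular_mulmx QP).
rewrite -scaleN1r detZ det_tr det_map_mx normrM normrX normrN1 expr1n mul1r.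
by rewrite -intr_norm (unimodular_normr_det PQ).
Qed.
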